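(* In the setting of the context, assume (G2') and (HJ'), and let $\tilde\rho$ be a metric on $X$ inducing its topology, with constants $\gamma\ge1$, $C\ge1$ such that $C^{-1}\tilde\rho(x,y)^{-\gamma}\le\tilde G(x,y)\le C\tilde\rho(x,y)^{-\gamma}$ for all $x,y$. Then there exist $\tilde\alpha\in(0,1)$ and $\tilde c_J\ge1$ such that for all $x\in X_0$, $0<r<\tilde\alpha\tilde R_0(x)$ and $y\in\tilde U(x,\tilde\alpha^2r)$, $$\tilde\mu_x^{\tilde U(x,\tilde\alpha r)}(E)\le\tilde c_J\,\tilde\mu_y^{\tilde U(x,r)}(E)\qquad\text{for every Borel }E\subseteq X\setminus\tilde U(x,r).$$
   Context: $(X,\rho)$ separable metric space, $X_0\subsetneq X$ open. For every open $U\subseteq X$ and $x\in X$ a finite Borel measure $\mu_x^U$ is given such that for all open $U,V$ and $x$: $\mu_x^U(U)=0$, $\mu_x^U(X)\le1$, $\mu_x^U=\varepsilon_x$ (Dirac) if $x\notin U$; $y\mapsto\mu_y^U(E)$ universally measurable for Borel $E$; $\mu_x^U=\int\mu_y^U\,d\mu_x^V(y)$ if $V\subseteq U$. $\tilde\mu_x^U:=\frac{w}{w(x)}\mu_x^U$ (measure with density $w/w(x)$ w.r.t. $\mu_x^U$). $G\colon X\times X\to(0,\infty]$ Borel; $V(x,s):=\{y:G(y,x)^{-1}<s\}$, $\overset\circ V(x,s)$ its interior, $S_0(x):=\sup\{s>0:\overline{V(x,s)}\subseteq X_0\}$ for $x\in X_0$. $\tilde U(x,r):=\{y:\tilde\rho(x,y)<r\}$,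 $\tilde R_0(x):=\sup\{r>0:\overline{\tilde U(x,r)}\subseteq X_0\}$. (G2'): for every $x$, $G(x,x)=\lim_{y\to x}G(y,x)=\infty$; there is a Borel $w$ with $0<w\le1$ and $\int w\,d\mu_x^U\le w(x)$ for all open $U$, $x$; there is $\tilde c>1$ with $\tilde G(x,z)\wedge\tilde G(y,z)\le\tilde c\tilde G(x,y)$ for all $x,y,z$, where $\tilde G(x,y):=G(x,y)/(w(x)w(y))$; $\lambda:=\inf w(X_0)>0$; for each $x$ and neighborhood $V$ of $x$, $G(\cdot,x)/w$ is bounded on $X\setminus V$. (HJ'): there exist $\alpha\in(0,1)$, $c_J\ge1$ such that for all $x\in X_0$, $0<s<S_0(x)$ and $y\in\overset\circ V(x,\alpha^2s)$, $\mu_x^{\overset\circ V(x,\alpha s)}(E)\le c_J\mu_y^{\overset\circ V(x,s)}(E)$ for every Borel $E\subseteq X\setminus\overset\circ V(x,s)$. *)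

From HB Require Import structures.
From mathcomp Require Import all_boot all_order all_algebra.
From mathcomp Require Import all_classical all_reals all_analysis measurable_realfun.
Set Implicit Arguments. Unset Strict Implicit. Unset Printing Implicit Defensive.
Import Order.TTheory GRing.Theory Num.Theory.
Local Open Scope classical_set_scope.
Local Open Scope ring_scope.

Definition BorelT (X : ptopologicalType) := g_sigma_algebraType (@open X).

Section defs.
Context {R : realType}.

Definition is_metric {X : Type} (d : X -> X -> R) : Prop :=
  (forall x y, 0 <= d x y) /\ (forall x y, d x y = 0 <-> x = y) /\
  (forall x y, d x y = d y x) /\ (forall x y z, d x z <= d x y + d y z).

Definition induces_topology {X : topologicalType} (d : X -> X -> R) : Prop :=
  forall A : set X, open A <->
    (forall x, A x -> exists2 r : R, 0 < r & [set y | d x y < r] `<=` A).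

Definition separable (X : topologicalType) : Prop :=
  exists D : set X, countable D /\ closure D = setT.

Definition univ_meas_set {X : ptopologicalType} (A : set (BorelT X)) : Prop :=
  forall nu : {measure set (BorelT X) -> \bar R}, (nu setT < +oo)%E ->
    exists B1 B2 : set (BorelT X), [/\ measurable B1, measurable B2,
      B1 `<=` A, A `<=` B2 & nu (B2 `\` B1) = 0%E].

Definition univ_meas_fun {X : ptopologicalType} (f : BorelT X -> \bar R) : Prop :=
  forall B : set (\bar R), measurable B -> univ_meas_set (f @^-1` B).

(* t^{-1} for t in (0, +oo], with +oo^{-1} = 0 *)
Definition einv (t : \bar R) : R :=
  match t with EFin r => r^-1 | _ => 0 end.

Definition Vset {X : Type} (G : X -> X -> \bar R) (x : X) (s : R) : set X :=
  [set y | einv (G y x) < s].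

Definition S0 {X : topologicalType} (G : X -> X -> \bar R) (X0 : set X) (x : X)
  : \bar R :=
  ereal_sup [set (s%:E)%E | s in [set s : R | 0 < s /\ closure (Vset G x s) `<=` X0]].

Definition Uball {X : Type} (d : X -> X -> R) (x : X) (r : R) : set X :=
  [set y | d x y < r].

Definition R0 {X : topologicalType} (d : X -> X -> R) (X0 : set X) (x : X) : \bar R :=
  ereal_sup [set (r%:E)%E | r in [set r : R | 0 < r /\ closure (Uball d x r) `<=` X0]].

Definition Gt {X : Type} (G : X -> X -> \bar R) (w : X -> R) (x y : X) : \bar R :=
  (G x y * ((w x * w y)^-1)%:E)%E.

(* t^{-gamma} in (0, +oo], with 0^{-gamma} = +oo *)
Definition negpow (t gamma : R) : \bar R :=
  if t == 0 then +oo%E else (t `^ (- gamma))%:E.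

Definition mut {X : ptopologicalType}
  (mu : set X -> X -> {measure set (BorelT X) -> \bar R}) (w : X -> R)
  (U : set X) (x : X) (E : set (BorelT X)) : \bar R :=
  (\int[mu U x]_(y in E) (w y / w x)%:E)%E.

Definition kernel_family {X : ptopologicalType}
  (mu : set X -> X -> {measure set (BorelT X) -> \bar R}) : Prop :=
  (forall U x, open U -> mu U x U = 0%E) /\
  (forall U x, open U -> (mu U x setT <= 1)%E) /\
  (forall U x, open U -> ~ U x ->
     forall E : set (BorelT X), measurable E -> mu U x E = (\1_E x)%:E) /\
  (forall U, open U -> forall E : set (BorelT X), measurable E ->
     univ_meas_fun (fun y => mu U y E)) /\
  (forall U V x, open U -> open V -> V `<=` U ->
     forall E : set (BorelT X), measurable E ->
       mu U x E = (\int[mu V x]_y mu U y E)%E).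

Definition G2' {X : ptopologicalType} (X0 : set X)
  (mu : set X -> X -> {measure set (BorelT X) -> \bar R})
  (G : X -> X -> \bar R) (w : BorelT X -> R) : Prop :=
  (forall x, G x x = +oo%E /\ (G^~ x @ x^' --> +oo%E)) /\
    [/\ measurable_fun setT w /\ (forall x, 0 < w x <= 1),
        (forall U x, open U -> (\int[mu U x]_y (w y)%:E <= (w x)%:E)%E),
        (exists2 c : R, 1 < c &
           forall x y z, (Order.min (Gt G w x z) (Gt G w y z) <= c%:E * Gt G w x y)%E),
        (exists2 lam : R, 0 < lam & forall x, X0 x -> lam <= w x) &
        (forall x (V : set X), nbhs x V -> exists M : R,
           forall y, ~ V y -> (G y x * ((w y)^-1)%:E <= M%:E)%E)].

Definition HJ' {X : ptopologicalType} (X0 : set X)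
  (mu : set X -> X -> {measure set (BorelT X) -> \bar R})
  (G : X -> X -> \bar R) : Prop :=
  exists alpha cJ : R, [/\ 0 < alpha < 1, 1 <= cJ &
    forall x, X0 x -> forall s : R, 0 < s -> (s%:E < S0 G X0 x)%E ->
      forall y, (interior (Vset G x (alpha ^+ 2 * s))) y ->
      forall E : set (BorelT X), measurable E ->
        E `<=` ~` interior (Vset G x s) ->
        (mu (interior (Vset G x (alpha * s))) x E
           <= cJ%:E * mu (interior (Vset G x s)) y E)%E].

End defs.

From HB Require Import structures.
From mathcomp Require Import all_boot all_order all_algebra.
From mathcomp Require Import all_classical all_reals all_analysis measurable_realfun.
From mathcomp Require Import lra.
Import Order.TTheory GRing.Theory Num.Theory.
Local Open Scope classical_set_scope.
Local Open Scope ring_scope.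
Import HBNNSimple.

(* Since G~ is comparable with rho~^(-gamma) and l <= w <= 1 on X0, where
   l = min(lambda, 1), the level sets V(x,s) of G(., x) are sandwiched between
   rho~-balls: V(x, t^gamma / C) is contained in U~(x,t), which for balls inside X0
   is contained in V(x, C t^gamma / l^2).  With s = r^gamma / C and
   alpha~ = l^2 alpha / C^2 this gives U~(x, alpha~ r) in V(x, alpha s),
   U~(x, alpha~^2 r) in V(x, alpha^2 s) and V(x, s) in U~(x, r).  Since mu^U E
   increases with U when E lies outside the larger domain, (HJ') for the V's
   transfers to the balls, and passing to the densities w / w(x) costs at most a
   factor 1 / l. *)

Lemma ltr_powR2r {R : realType} (r x y : R) : 0 < r -> 0 <= x -> 0 <= y ->
  (x `^ r < y `^ r) = (x < y).
Proof.
move=> r_gt0 x_ge0 y_ge0; apply/idP/idP; last exact: gt0_ltr_powR.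
by apply: contraTT; rewrite -!leNgt; apply: (ge0_ler_powR (ltW r_gt0)); rewrite nnegrE.
Qed.

Lemma einv_ge0 {R : realType} {g : \bar R} : (0 < g)%E -> 0 <= einv g.
Proof. by case: g => [g||] //=; rewrite lte_fin => /ltW; rewrite invr_ge0. Qed.

Section einv_negpow.
Context {R : realType} {gamma C : R}.
Hypotheses (gamma_gt0 : 0 < gamma) (C_gt0 : 0 < C).

Lemma powR_div_le_einv {g : \bar R} {W t : R} : (0 < g)%E -> 0 < W <= 1 ->
  0 <= t -> (g * (W^-1)%:E <= C%:E * negpow t gamma)%E ->
  t `^ gamma / C <= einv g.
Proof.
move=> g_gt0 /andP[W_gt0 W_le1] t_ge0.
have [->|t_neq0] := eqVneq t 0.
  by rewrite powR0 ?gt_eqF // mul0r => _; exact: einv_ge0.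
have P_gt0 : 0 < t `^ gamma by rewrite powR_gt0 // lt_neqAle eq_sym t_neq0.
rewrite /negpow (negbTE t_neq0) powRN.
case: g g_gt0 => [g||] //=; last first.
  by rewrite gt0_mulye ?lte_fin ?invr_gt0 // -EFinM leye_eq.
rewrite lte_fin -EFinM lee_fin => g_gt0 gW.
have g_le : g <= C / t `^ gamma.
  by apply: le_trans gW; rewrite ler_peMr ?invf_ge1 // ltW.
rewrite ler_pdivlMr // in g_le.
by rewrite ler_pdivrMr // mulrC ler_pdivlMr // mulrC.
Qed.

Lemma einv_mul_le_powR {g : \bar R} {W t : R} : (0 < g)%E -> 0 < W ->
  0 <= t -> ((C^-1)%:E * negpow t gamma <= g * (W^-1)%:E)%E ->
  einv g * W <= C * t `^ gamma.
Proof.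
move=> g_gt0 W_gt0 t_ge0.
have rhs_ge0 : 0 <= C * t `^ gamma by rewrite mulr_ge0 ?powR_ge0 ?ltW.
case: g g_gt0 => [g||] //=; last by rewrite mul0r.
rewrite lte_fin => g_gt0; rewrite /negpow; have [_|t_neq0] := eqVneq t 0.
  by rewrite gt0_muley ?lte_fin ?invr_gt0 // -EFinM leye_eq.
have P_gt0 : 0 < t `^ gamma by rewrite powR_gt0 // lt_neqAle eq_sym t_neq0.
rewrite powRN -!EFinM lee_fin -invfM => gW.
have CP_gt0 : 0 < C * t `^ gamma by rewrite mulr_gt0.
move: gW; rewrite -lef_pV2 ?posrE ?invr_gt0 ?divr_gt0 //.
by rewrite invrK invfM invrK mulrC.
Qed.

End einv_negpow.

Lemma subset_Uball {R : realType} {X : Type} (d : X -> X -> R) x {r r' : R} :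
  r <= r' -> Uball d x r `<=` Uball d x r'.
Proof. by move=> rr' y /lt_le_trans; apply. Qed.

Lemma subset_Vset {R : realType} {X : Type} (G : X -> X -> \bar R) x {s s' : R} :
  s <= s' -> Vset G x s `<=` Vset G x s'.
Proof. by move=> ss' y /lt_le_trans; apply. Qed.

Lemma open_Uball {R : realType} {X : topologicalType} (d : X -> X -> R) x r :
  is_metric d -> induces_topology d -> open (Uball d x r).
Proof.
move=> [_ [_ [_ d_tri]]] /(_ (Uball d x r))[_]; apply=> z xz.
exists (r - d x z); first by rewrite subr_gt0.
by move=> u /= zu; rewrite /Uball /=; have := d_tri x z u; lra.
Qed.

Lemma lt_R0P {R : realType} {X : topologicalType} {d : X -> X -> R} {X0 x} {r : R} :
  (r%:E < R0 d X0 x)%E -> exists2 r', r < r' & closure (Uball d x r') `<=` X0.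
Proof. by move=> /ereal_sup_gt[_ [r' [_ r'X0] <-]]; rewrite lte_fin; exists r'. Qed.

Lemma Uball_sub_of_lt_R0 {R : realType} {X : topologicalType} {d : X -> X -> R}
  {X0 x} {r : R} :
  (r%:E < R0 d X0 x)%E -> Uball d x r `<=` X0.
Proof.
move=> /lt_R0P[r' /ltW rr' r'X0].
by move=> y /(subset_Uball d x rr') /subset_closure /r'X0.
Qed.

Section balls_and_level_sets.
Context {R : realType} {X : topologicalType} {G : X -> X -> \bar R} {w : X -> R}.
Context {d : X -> X -> R} {gamma C : R}.
Hypotheses (G_gt0 : forall x y, (0 < G x y)%E) (w_gt0 : forall x, 0 < w x).
Hypotheses (w_le1 : forall x, w x <= 1) (d_metric : is_metric d).
Hypotheses (gamma_ge1 : 1 <= gamma) (C_ge1 : 1 <= C).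
Hypothesis Gt_ub : forall x y, (Gt G w x y <= C%:E * negpow (d x y) gamma)%E.
Hypothesis Gt_lb : forall x y, ((C^-1)%:E * negpow (d x y) gamma <= Gt G w x y)%E.

Let gamma_gt0 : 0 < gamma. Proof. exact: lt_le_trans ltr01 gamma_ge1. Qed.
Let C_gt0 : 0 < C. Proof. exact: lt_le_trans ltr01 C_ge1. Qed.

Lemma Vset_sub_Uball x t : 0 <= t -> Vset G x (t `^ gamma / C) `<=` Uball d x t.
Proof.
move=> t_ge0 y Vy; have [d_ge0 [_ [d_sym _]]] := d_metric.
have W01 : 0 < w y * w x <= 1 by rewrite mulr_gt0 // mulr_ile1 // ltW.
have := le_lt_trans (powR_div_le_einv gamma_gt0 C_gt0 (G_gt0 y x) W01
  (d_ge0 y x) (Gt_ub y x)) Vy.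
by rewrite ltr_pM2r ?invr_gt0 // ltr_powR2r // d_sym.
Qed.

Lemma Uball_sub_Vset x t l : 0 < l -> (forall y, Uball d x t y -> l <= w y) ->
  Uball d x t `<=` Vset G x (C * t `^ gamma / l ^+ 2).
Proof.
move=> l_gt0 w_ge y xy; have [d_ge0 [d_eq0 [d_sym _]]] := d_metric.
have xx : Uball d x t x by rewrite /Uball /= (d_eq0 x x).2 // (le_lt_trans (d_ge0 x y)).
have W_ge : l ^+ 2 <= w y * w x.
  by rewrite expr2; apply: ler_pM; [exact: ltW|exact: ltW|exact: w_ge|exact: w_ge].
have := einv_mul_le_powR C_gt0 (G_gt0 y x) (mulr_gt0 (w_gt0 y) (w_gt0 x))
  (d_ge0 y x) (Gt_lb y x).
rewrite d_sym => einv_le; rewrite /Vset /= ltr_pdivlMr ?exprn_gt0 //.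
apply: le_lt_trans (ler_wpM2l (einv_ge0 (G_gt0 y x)) W_ge) _.
apply: le_lt_trans einv_le _.
by rewrite ltr_pM2l // ltr_powR2r // ltW // (le_lt_trans (d_ge0 x y)).
Qed.

Lemma Uball_scaled_sub_Vset x r l a k : 0 < l -> 0 < k <= 1 ->
  k * C ^+ 2 <= l ^+ 2 * a -> 0 <= r -> (forall y, Uball d x r y -> l <= w y) ->
  Uball d x (k * r) `<=` Vset G x (a * (r `^ gamma / C)).
Proof.
move=> l_gt0 /andP[k_gt0 k_le1] kC r_ge0 w_ge.
apply: subset_trans (Uball_sub_Vset x _ _ l_gt0 _) (subset_Vset G x _).
  by move=> y /(subset_Uball d x (ler_piMl r_ge0 k_le1)); exact: w_ge.
rewrite powRM ?(ltW k_gt0) //.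
apply: (@le_trans _ _ (C * (k * r `^ gamma) / l ^+ 2)).
  rewrite ler_pM2r ?invr_gt0 ?exprn_gt0 // ler_pM2l //.
  by rewrite ler_wpM2r ?powR_ge0 // ge1r_powR // k_gt0.
rewrite mulrA mulrAC [leRHS]mulrCA [leRHS]mulrC ler_wpM2r ?powR_ge0 //.
rewrite ler_pdivrMr ?exprn_gt0 // mulrAC ler_pdivlMr //.
by rewrite mulrC mulrA -expr2 mulrC [a * _]mulrC.
Qed.

Lemma lt_S0_of_lt_R0 X0 x r : 0 <= r -> (r%:E < R0 d X0 x)%E ->
  ((r `^ gamma / C)%:E < S0 G X0 x)%E.
Proof.
move=> r_ge0 /lt_R0P[r' rr' r'X0].
have r'_gt0 : 0 < r' := le_lt_trans r_ge0 rr'.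
apply: (@lt_le_trans _ _ (r' `^ gamma / C)%:E).
  by rewrite lte_fin ltr_pM2r ?invr_gt0 // ltr_powR2r // ltW.
apply: ereal_sup_ubound; exists (r' `^ gamma / C) => //; split.
  by rewrite divr_gt0 // powR_gt0.
by move=> z /(closureS (Vset_sub_Uball x _ (ltW r'_gt0))) /r'X0.
Qed.

End balls_and_level_sets.

Section le_measure_integral.
Context {d : measure_display} {T : measurableType d} {R : realType}.
Variables m1 m2 : {measure set T -> \bar R}.

(* Unlike [ge0_le_measure_integral], no measurability of [f] is required and the
   measures need only be compared on subsets of [E]. *)
Lemma ge0_le_measure_integral_sub (E : set T) (f : T -> \bar R) :
  measurable E -> (forall S, measurable S -> S `<=` E -> (m1 S <= m2 S)%E) ->
  (forall x, (0 <= f x)%E) ->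
  (\int[m1]_(x in E) f x <= \int[m2]_(x in E) f x)%E.
Proof.
move=> mE m12 f0; rewrite !ge0_integralE // ge_ereal_sup// => _ [h/= hfS] <-.
apply: le_ereal_sup_tmp; exists (sintegral m2 h); first by exists h.
rewrite !sintegralE lee_fsum// => r [t _ <-].
have [->|h0] := eqVneq (h t) 0%R; first by rewrite !mul0e.
rewrite lee_pmul ?lee_fin//.
apply: m12; first exact: measurable_sfunP.
move=> u /= hu; have [//|uE] := pselect (E u).
exfalso; move/eqP: h0; apply.
have := hfS u; rewrite /patch ifF; last by apply/negbTE; apply/negP => /set_mem.
rewrite hu => hle; apply/le_anti/andP; split; first by rewrite -lee_fin.
by rewrite -hu; exact: fun_ge0.
Qed.

End le_measure_integral.

Lemma ge0_le_scaled_measure_integral {d : measure_display} {T : measurableType d}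
  {R : realType} (m1 m2 : {measure set T -> \bar R}) (c : R) (E : set T)
  (f : T -> \bar R) :
  0 <= c -> measurable E -> measurable_fun E f -> (forall x, (0 <= f x)%E) ->
  (forall S, measurable S -> S `<=` E -> (m1 S <= c%:E * m2 S)%E) ->
  (\int[m1]_(x in E) f x <= c%:E * \int[m2]_(x in E) f x)%E.
Proof.
move=> c_ge0 mE mf f0 m12.
rewrite -(ge0_integral_mscale m2 mE (NngNum c_ge0) mf); last by move=> x _.
exact: ge0_le_measure_integral_sub.
Qed.

Section kernel_comparison.
Context {R : realType} {X : ptopologicalType}.
Context {mu : set X -> X -> {measure set (BorelT X) -> \bar R}}.
Hypothesis mu_kernel : kernel_family mu.

(* By the balayage identity mu^U2_z = \int mu^U2_y dmu^U1_z, and mu^U2_y F = 1 on F. *)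
Lemma kernel_le_outside U1 U2 z (F : set (BorelT X)) : open U1 -> open U2 ->
  U1 `<=` U2 -> measurable F -> F `<=` ~` U2 -> (mu U1 z F <= mu U2 z F)%E.
Proof.
case: mu_kernel => _ [_ [mu_out [_ mu_bal]]] oU1 oU2 U12 mF FU2.
rewrite (mu_bal U2 U1 z oU2 oU1 U12 F mF).
rewrite ge0_integralTE; last by move=> y; exact: measure_ge0.
apply: le_trans; last first.
  apply: ereal_sup_ubound => /=; exists (indic_nnsfun R mF) => //.
  move=> y /=; rewrite mindicE; case: (boolP (y \in F)) => [/set_mem yF|yF].
    by rewrite (mu_out U2 y oU2 (FU2 _ yF) F mF) indicE mem_set.
  exact: (measure_ge0 (mu U2 y) F).
by rewrite sintegral_indic.
Qed.

Lemma kernel_le_sandwich {U1 V1 V2 U2 : set X} {x y : X} {F : set (BorelT X)} {c : R} :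
  open U1 -> open V1 -> open V2 -> open U2 ->
  U1 `<=` V1 -> V1 `<=` U2 -> V2 `<=` U2 -> measurable F -> F `<=` ~` U2 -> 0 <= c ->
  (mu V1 x F <= c%:E * mu V2 y F)%E -> (mu U1 x F <= c%:E * mu U2 y F)%E.
Proof.
move=> oU1 oV1 oV2 oU2 UV1 VU1 VU2 mF FU2 c_ge0 muV.
apply: le_trans (kernel_le_outside _ _ x _ oU1 oV1 UV1 mF _) _.
  by move=> z /FU2 /[swap] /VU1.
apply: le_trans muV _; rewrite lee_wpmul2l ?lee_fin //.
exact: kernel_le_outside.
Qed.

Context {w : BorelT X -> R}.
Hypotheses (w_meas : measurable_fun setT w) (w_gt0 : forall x, 0 < w x).

Lemma mutE U x (E : set (BorelT X)) : measurable E ->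
  mut mu w U x E = (((w x)^-1)%:E * \int[mu U x]_(y in E) (w y)%:E)%E.
Proof.
move=> mE; rewrite /mut -ge0_integralZl_EFin ?invr_ge0 ?(ltW (w_gt0 x)) //.
- by apply: eq_integral => y _; rewrite -EFinM mulrC.
- by move=> y _; rewrite lee_fin ltW.
- exact/measurable_EFinP/measurable_funTS.
Qed.

Lemma mut_le U V x y (E : set (BorelT X)) (c l : R) : measurable E ->
  0 <= c -> 0 < l <= w x -> w y <= 1 ->
  (forall F, measurable F -> F `<=` E -> (mu U x F <= c%:E * mu V y F)%E) ->
  (mut mu w U x E <= (c / l)%:E * mut mu w V y E)%E.
Proof.
move=> mE c_ge0 /andP[l_gt0 l_le] wy_le1 muUV; rewrite !mutE //.
have w_ge0 z : (0 <= (w z)%:E)%E by rewrite lee_fin ltW.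
have int_le : (\int[mu U x]_(z in E) (w z)%:E
    <= c%:E * \int[mu V y]_(z in E) (w z)%:E)%E.
  by apply: ge0_le_scaled_measure_integral => //; exact/measurable_EFinP/measurable_funTS.
apply: le_trans (lee_wpmul2l _ int_le) _; first by rewrite lee_fin invr_ge0 ltW.
rewrite muleA [in leRHS]muleA -!EFinM lee_wpmul2r ?integral_ge0 // lee_fin.
rewrite mulrC -mulrA ler_wpM2l // (@le_trans _ _ l^-1) //.
  by rewrite lef_pV2 ?posrE // (lt_le_trans l_gt0).
by rewrite ler_peMr ?invr_ge0 ?invf_ge1 // ltW.
Qed.

End kernel_comparison.

Definition alpha_tilde {R : realType} (l alpha C : R) := l ^+ 2 * alpha / C ^+ 2.

Section alpha_tilde.
Context {R : realType} {l alpha C : R}.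
Hypotheses (l_gt0 : 0 < l) (l_le1 : l <= 1) (alpha_gt0 : 0 < alpha) (C_ge1 : 1 <= C).

Let C_gt0 : 0 < C. Proof. exact: lt_le_trans ltr01 C_ge1. Qed.

Lemma alpha_tilde_gt0 : 0 < alpha_tilde l alpha C.
Proof. by rewrite !mulr_gt0 ?invr_gt0 ?exprn_gt0. Qed.

Lemma alpha_tildeM : alpha_tilde l alpha C * C ^+ 2 = l ^+ 2 * alpha.
Proof. by rewrite mulfVK // expf_neq0 // gt_eqF. Qed.

Lemma alpha_tilde_le : alpha_tilde l alpha C <= alpha.
Proof.
rewrite ler_pdivrMr ?exprn_gt0 // mulrC ler_wpM2l ?(ltW alpha_gt0) //.
by rewrite (@le_trans _ _ 1) ?expr_le1 ?expr_ge1 // ltW.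
Qed.

End alpha_tilde.

Section ball_HJ.
Context {R : realType} {X : ptopologicalType}.
Context {X0 : set X} {mu : set X -> X -> {measure set (BorelT X) -> \bar R}}.
Context {G : X -> X -> \bar R} {w : BorelT X -> R} {d : X -> X -> R}.
Context {gamma C alpha cJ l : R}.
Hypotheses (mu_kernel : kernel_family mu) (G_gt0 : forall x y, (0 < G x y)%E).
Hypotheses (w_meas : measurable_fun setT w) (w_gt0 : forall x, 0 < w x).
Hypotheses (w_le1 : forall x, w x <= 1).
Hypotheses (d_metric : is_metric d) (d_top : induces_topology d).
Hypotheses (gamma_ge1 : 1 <= gamma) (C_ge1 : 1 <= C).
Hypothesis Gt_ub : forall x y, (Gt G w x y <= C%:E * negpow (d x y) gamma)%E.
Hypothesis Gt_lb : forall x y, ((C^-1)%:E * negpow (d x y) gamma <= Gt G w x y)%E.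
Hypotheses (l_gt0 : 0 < l) (l_le1 : l <= 1) (l_le_w : forall z, X0 z -> l <= w z).
Hypotheses (alpha_gt0 : 0 < alpha) (alpha_le1 : alpha <= 1) (cJ_ge0 : 0 <= cJ).
Hypothesis HJ : forall x, X0 x -> forall s, 0 < s -> (s%:E < S0 G X0 x)%E ->
  forall y, (Vset G x (alpha ^+ 2 * s))° y ->
  forall E : set (BorelT X), measurable E -> E `<=` ~` (Vset G x s)° ->
  (mu (Vset G x (alpha * s))° x E <= cJ%:E * mu (Vset G x s)° y E)%E.

Lemma mut_Uball_le x r y (E : set (BorelT X)) : X0 x -> 0 < r ->
  (r%:E < R0 d X0 x)%E -> Uball d x (alpha_tilde l alpha C ^+ 2 * r) y ->
  measurable E -> E `<=` ~` Uball d x r ->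
  (mut mu w (Uball d x (alpha_tilde l alpha C * r)) x E
     <= (cJ / l)%:E * mut mu w (Uball d x r) y E)%E.
Proof.
move=> X0x r_gt0 r_lt_R0 y_near mE E_far.
set b := alpha_tilde l alpha C.
have b_gt0 : 0 < b := alpha_tilde_gt0 l_gt0 alpha_gt0 C_ge1.
have b_le_alpha : b <= alpha := alpha_tilde_le l_gt0 l_le1 alpha_gt0 C_ge1.
have bC : b * C ^+ 2 = l ^+ 2 * alpha := alpha_tildeM C_ge1.
have w_ge z : Uball d x r z -> l <= w z.
  by move=> /(Uball_sub_of_lt_R0 r_lt_R0); exact: l_le_w.
pose s := r `^ gamma / C.
have s_gt0 : 0 < s by rewrite divr_gt0 ?powR_gt0 // (lt_le_trans ltr01).
have b_le1 : b <= 1 := le_trans b_le_alpha alpha_le1.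
have scaled_sub := Uball_scaled_sub_Vset G_gt0 w_gt0 d_metric gamma_ge1 C_ge1 Gt_lb
  x r l _ _ l_gt0 _ _ (ltW r_gt0) w_ge.
have sub_V1 : Uball d x (b * r) `<=` Vset G x (alpha * s).
  by apply: scaled_sub; rewrite ?b_gt0 ?bC.
have sub_V2 : Uball d x (b ^+ 2 * r) `<=` Vset G x (alpha ^+ 2 * s).
  apply: scaled_sub; first by rewrite exprn_gt0 // expr_le1 // ltW.
  rewrite expr2 -mulrA bC (le_trans (ler_wpM2r _ b_le_alpha)) //.
    by rewrite mulr_ge0 ?exprn_ge0 // ltW.
  by rewrite mulrCA -expr2.
have open_U t : open (Uball d x t) := open_Uball d x t d_metric d_top.
have V_sub_U t : t <= s -> (Vset G x t)° `<=` Uball d x r.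
  move=> ts; apply: subset_trans (@interior_subset _ _) _.
  apply: subset_trans (subset_Vset G x ts) _.
  exact: Vset_sub_Uball G_gt0 w_gt0 w_le1 d_metric gamma_ge1 C_ge1 Gt_ub x r (ltW r_gt0).
have y_int : (Vset G x (alpha ^+ 2 * s))° y.
  by move: sub_V2; rewrite open_subsetE //; apply.
have s_lt_S0 : (s%:E < S0 G X0 x)%E.
  exact: lt_S0_of_lt_R0 G_gt0 w_gt0 w_le1 d_metric gamma_ge1 C_ge1 Gt_ub _ _ _ (ltW r_gt0) r_lt_R0.
apply: mut_le => //; first by rewrite l_gt0 l_le_w.
move=> F mF FE; have F_far := subset_trans FE E_far.
have F_far_V : F `<=` ~` (Vset G x s)° by move=> z /F_far zr /(V_sub_U _ (lexx s)).
apply: (kernel_le_sandwich mu_kernel (open_U _) (@open_interior _ _)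
  (@open_interior _ _) (open_U _) _ _ _ mF F_far cJ_ge0
  (HJ x X0x s s_gt0 s_lt_S0 y y_int F mF F_far_V)).
- by rewrite -open_subsetE.
- by apply: V_sub_U; rewrite ger_pMl ?alpha_le1.
- exact: V_sub_U.
Qed.

End ball_HJ.

Theorem lemma7p6 (R : realType) (X : ptopologicalType)
  (rho : X -> X -> R) (X0 : set X)
  (mu : set X -> X -> {measure set (BorelT X) -> \bar R})
  (G : X -> X -> \bar R)
  (w : BorelT X -> R)
  (rhot : X -> X -> R) (gamma C : R) :
  is_metric rho -> induces_topology rho -> separable X ->
  open X0 -> X0 != setT ->
  kernel_family mu ->
  (forall x y, (0 < G x y)%E) ->
  measurable_fun setT (fun p : (BorelT X * BorelT X)%type => G p.1 p.2) ->
  G2' X0 mu G w -> HJ' X0 mu G ->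
  is_metric rhot -> induces_topology rhot ->
  1 <= gamma -> 1 <= C ->
  (forall x y, (C^-1)%:E * negpow (rhot x y) gamma <= Gt G w x y /\
               Gt G w x y <= C%:E * negpow (rhot x y) gamma)%E ->
  exists alphat cJt : R, [/\ 0 < alphat < 1, 1 <= cJt &
    forall x, X0 x -> forall r : R, 0 < r -> (r%:E < alphat%:E * R0 rhot X0 x)%E ->
      forall y, Uball rhot x (alphat ^+ 2 * r) y ->
      forall E : set (BorelT X), measurable E -> E `<=` ~` Uball rhot x r ->
        (mut mu w (Uball rhot x (alphat * r)) x E
           <= cJt%:E * mut mu w (Uball rhot x r) y E)%E].
Proof.
move=> _ _ _ _ _ mu_kernel G_gt0 _ [_ [[w_meas w01] _ _ [lam lam_gt0 lam_le] _]]
  [alpha [cJ [/andP[alpha_gt0 alpha_lt1] cJ_ge1 HJ]]] rhot_metric rhot_top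
  gamma_ge1 C_ge1 Gt_bounds.
have w_gt0 z : 0 < w z by case/andP: (w01 z).
have w_le1 z : w z <= 1 by case/andP: (w01 z).
pose l := Num.min lam 1.
have l_gt0 : 0 < l by rewrite lt_min lam_gt0 ltr01.
have l_le1 : l <= 1 by rewrite ge_min lexx orbT.
have l_le_w z : X0 z -> l <= w z by move=> /lam_le; rewrite ge_min => ->.
have b_gt0 := alpha_tilde_gt0 l_gt0 alpha_gt0 C_ge1.
have b_lt1 := le_lt_trans (alpha_tilde_le l_gt0 l_le1 alpha_gt0 C_ge1) alpha_lt1.
exists (alpha_tilde l alpha C), (cJ / l); split; first by rewrite b_gt0.
  by rewrite ler_pdivlMr // mul1r (le_trans l_le1).
move=> x X0x r r_gt0 r_lt y y_near E mE E_far.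
apply: (mut_Uball_le mu_kernel G_gt0 w_meas w_gt0 w_le1 rhot_metric rhot_top
  gamma_ge1 C_ge1 (fun x y => (Gt_bounds x y).2) (fun x y => (Gt_bounds x y).1)
  l_gt0 l_le1 l_le_w alpha_gt0 (ltW alpha_lt1) (le_trans ler01 cJ_ge1) HJ) => //.
rewrite ltNge; apply: contraTN r_lt => R0_le_r; rewrite -leNgt.
apply: le_trans (lee_wpmul2l _ R0_le_r) _; first by rewrite lee_fin ltW.
by rewrite -EFinM lee_fin ger_pMl // ltW.
Qed.
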